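(* Let $L$ be a totally ordered normal incline and let $A=(a_{ij})$ be a $3\times 3$ completely positive matrix over $L$. Then at least two of the following inequalities hold: $$a_{11}\otimes a_{23}\ge a_{12}\otimes a_{13},\qquad a_{22}\otimes a_{13}\ge a_{12}\otimes a_{23},\qquad a_{33}\otimes a_{12}\ge a_{13}\otimes a_{23}.$$
   Context: An incline is a nonempty set $L$ with binary operations $\oplus,\otimes$ such that $(L,\oplus)$ is a semilattice ($\oplus$ associative, commutative, idempotent), $(L,\otimes)$ is a semigroup, $x\otimes(y\oplus z)=(x\otimes y)\oplus(x\otimes z)$ and $x\oplus(x\otimes y)=x$ for all $x,y,z$. The order is $x\le y\iff x\oplus y=y$; $L$ is totally ordered if this order is total, and commutative if $\otimes$ is commutative. An r-ideal is a nonempty $J\subseteq L$ closed under $\oplus$ and under multiplication by arbitrary elements of $L$; a lattice ideal is a nonempty $J\subseteq L$ closed under $\oplus$ and downward closed. A commutative incline $L$ is normal if it has an additive identity $\mathbf{0}$ and a multiplicative identity $\mathbf{1}$ and: every singly generated r-ideal is a lattice ideal (LI-property); for each $x$ there is a unique $c$ with $c\otimes c=x$; $x\otimes y\le(x\otimes x)\oplus(y\otimes y)$ for all $x,y$. Matrix product: $(BC)_{ij}=\bigoplus_k b_{ik}\otimes c_{kj}$; $B^T$ is the transpose. $A$ is completely positive if $A=BB^T$ for some $3\times k$ matrix $B$ over $L$ all of whose entries are of the form $c\otimes c$. *)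

From Stdlib Require Import List.
Import ListNotations.

Record incline := Incline {
  car :> Type;
  iadd : car -> car -> car;
  imul : car -> car -> car;
  iadd_assoc : forall x y z, iadd x (iadd y z) = iadd (iadd x y) z;
  iadd_comm : forall x y, iadd x y = iadd y x;
  iadd_idem : forall x, iadd x x = x;
  imul_assoc : forall x y z, imul x (imul y z) = imul (imul x y) z;
  imul_distl : forall x y z, imul x (iadd y z) = iadd (imul x y) (imul x z);
  iabsorb : forall x y, iadd x (imul x y) = x
}.

Arguments iadd {i}.
Arguments imul {i}.

Section InclineDefs.
Variable L : incline.

Definition ile (x y : L) : Prop := iadd x y = y.

Definition totally_ordered : Prop := forall x y : L, ile x y \/ ile y x.

Definition commutative : Prop := forall x y : L, imul x y = imul y x.

(* r-ideal: nonempty, closed under oplus, and under multiplication by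
   arbitrary elements of L (commutative setting; we require both sides). *)
Definition r_ideal (J : L -> Prop) : Prop :=
  (exists x, J x) /\
  (forall x y, J x -> J y -> J (iadd x y)) /\
  (forall x r, J x -> J (imul r x) /\ J (imul x r)).

Definition lattice_ideal (J : L -> Prop) : Prop :=
  (exists x, J x) /\
  (forall x y, J x -> J y -> J (iadd x y)) /\
  (forall x y, J y -> ile x y -> J x).

Definition gen_r_ideal (a : L) (x : L) : Prop :=
  forall J, r_ideal J -> J a -> J x.

Definition LI_property : Prop := forall a : L, lattice_ideal (gen_r_ideal a).

Definition is_zero (z : L) : Prop := forall x, iadd z x = x.
Definition is_one (u : L) : Prop := forall x, imul u x = x /\ imul x u = x.

Definition normal : Prop :=
  commutative /\
  (exists z : L, is_zero z) /\
  (exists u : L, is_one u) /\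
  LI_property /\
  (forall x : L, exists c : L, imul c c = x /\ forall c', imul c' c' = x -> c' = c) /\
  (forall x y : L, ile (imul x y) (iadd (imul x x) (imul y y))).

Definition is_square (x : L) : Prop := exists c : L, x = imul c c.

(* 3 x k matrices B are given by their k columns (b_1j, b_2j, b_3j);
   A = B B^T means a_ij = (+)_k b_ik (x) b_jk.  The empty sum (k = 0) is the
   additive identity z. *)
Definition bigsum (z : L) (l : list L) : L := fold_right iadd z l.

Definition completely_positive (z : L) (A : nat -> nat -> L) : Prop :=
  exists cols : list (L * L * L),
    (forall c, In c cols ->
       let '(b1, b2, b3) := c in is_square b1 /\ is_square b2 /\ is_square b3) /\
    forall i j, i < 3 -> j < 3 ->
      A i j = bigsum z (map (fun c : L * L * L =>
                   let '(b1, b2, b3) := c in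
                   let b := fun n => match n with 0 => b1 | 1 => b2 | _ => b3 end in
                   imul (b i) (b j)) cols).

End InclineDefs.

(* If A = B B^T over a totally ordered incline, each off-diagonal entry a_ij is a maximum
   over the columns of B, hence equals x y for the entries x = b_i, y = b_j of one column,
   while x x <= a_ii and y y <= a_jj.  Comparing y a_ik with x a_jk then gives
   a_ij a_ik <= a_ii a_jk or a_ij a_jk <= a_jj a_ik.  For the three pairs {i, j} this reads
   h1 \/ h2, h1 \/ h3 and h2 \/ h3, so two of h1, h2, h3 hold.  Of normality only
   commutativity is used, and the entries of B need not be squares. *)

From Stdlib Require Import List Lia.

Section InclineOrder.

Variable L : incline.

Lemma ile_trans (x y w : L) : ile L x y -> ile L y w -> ile L x w.
Proof. unfold ile; intros Hxy Hyw. rewrite <- Hyw, iadd_assoc, Hxy. reflexivity. Qed.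

Lemma ile_iadd_l (x y : L) : ile L x (iadd x y).
Proof. unfold ile. rewrite iadd_assoc, iadd_idem. reflexivity. Qed.

Lemma ile_iadd_r (x y w : L) : ile L x y -> ile L x (iadd w y).
Proof.
  unfold ile; intros Hxy.
  rewrite iadd_assoc, (iadd_comm _ x w), <- iadd_assoc, Hxy. reflexivity.
Qed.

Lemma imul_zero_l (z x : L) : is_zero L z -> imul z x = z.
Proof. intros Z. pose proof (iabsorb L z x) as Habs. rewrite Z in Habs. exact Habs. Qed.

Lemma imul_le_compat_l (x y y' : L) : ile L y y' -> ile L (imul x y) (imul x y').
Proof. unfold ile; intros Hy. rewrite <- imul_distl, Hy. reflexivity. Qed.

Lemma ile_bigsum_In (z : L) {T : Type} (f : T -> L) (l : list T) (c : T) :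
  In c l -> ile L (f c) (bigsum L z (map f l)).
Proof.
  induction l as [|a l IH]; simpl; [tauto|].
  intros [<-|Hc]; [apply ile_iadd_l | apply ile_iadd_r; auto].
Qed.

Hypothesis C : commutative L.

Lemma imul_le_compat_r (x y y' : L) : ile L y y' -> ile L (imul y x) (imul y' x).
Proof. intros Hy. rewrite (C y), (C y'). apply imul_le_compat_l; exact Hy. Qed.

Hypothesis TO : totally_ordered L.

Lemma bigsum_attained (z : L) {T : Type} (f : T -> L) (l : list T) :
  is_zero L z ->
  bigsum L z (map f l) = z \/ exists c, In c l /\ bigsum L z (map f l) = f c.
Proof.
  intros Z. induction l as [|a l IH]; simpl; [auto|].
  right. destruct IH as [E|[c [Hc E]]]; unfold bigsum in *; rewrite E.
  - exists a; split; auto. rewrite iadd_comm. apply Z.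
  - destruct (TO (f a) (f c)) as [Hac|Hca].
    + exists c; split; auto.
    + exists a; split; auto. rewrite iadd_comm. exact Hca.
Qed.

Lemma imul_pivot (x y a b u w : L) :
  ile L (imul x x) a -> ile L (imul y y) b ->
  ile L (imul (imul x y) u) (imul a w) \/ ile L (imul (imul x y) w) (imul b u).
Proof.
  intros Hx Hy.
  destruct (TO (imul y u) (imul x w)) as [Hle|Hge].
  - left. rewrite <- imul_assoc.
    apply ile_trans with (imul x (imul x w)); [apply imul_le_compat_l; exact Hle|].
    rewrite imul_assoc. apply imul_le_compat_r; exact Hx.
  - right. rewrite (C x y), <- imul_assoc.
    apply ile_trans with (imul y (imul y u)); [apply imul_le_compat_l; exact Hge|].
    rewrite imul_assoc. apply imul_le_compat_r; exact Hy.
Qed.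

End InclineOrder.

Section Gram.

Context (L : incline) (z : L) {T : Type} (v : T -> nat -> L) (cols : list T).

Definition gram (i j : nat) : L :=
  bigsum L z (map (fun c => imul (v c i) (v c j)) cols).

Lemma gram_sym (i j : nat) : commutative L -> gram i j = gram j i.
Proof. intros C. unfold gram. f_equal. apply map_ext. intros c. apply C. Qed.

Lemma gram_pivot (i j k : nat) :
  commutative L -> totally_ordered L -> is_zero L z ->
  ile L (imul (gram i j) (gram i k)) (imul (gram i i) (gram j k)) \/
  ile L (imul (gram i j) (gram j k)) (imul (gram j j) (gram i k)).
Proof.
  intros C TO Z.
  destruct (bigsum_attained L TO z (fun c => imul (v c i) (v c j)) cols Z)
    as [E|[c [Hc E]]]; fold (gram i j) in E; rewrite E.
  - left. rewrite imul_zero_l by exact Z. apply Z.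
  - apply imul_pivot; [exact C | exact TO | |];
      exact (ile_bigsum_In L z (fun c => imul (v c _) (v c _)) cols c Hc).
Qed.

End Gram.

Definition col_entry {L : incline} (c : L * L * L) (n : nat) : L :=
  let '(b1, b2, b3) := c in match n with 0 => b1 | 1 => b2 | _ => b3 end.

Lemma completely_positive_gram (L : incline) (z : L) (A : nat -> nat -> L) :
  completely_positive L z A ->
  exists cols, forall i j, i < 3 -> j < 3 -> A i j = gram L z col_entry cols i j.
Proof.
  intros [cols [_ HA]]. exists cols. intros i j Hi Hj.
  rewrite (HA i j Hi Hj). unfold gram. f_equal.
  apply map_ext. intros [[b1 b2] b3]. reflexivity.
Qed.

Theorem mainTheorem9 (L : incline) (z : L) (A : nat -> nat -> L) :
  totally_ordered L -> normal L -> is_zero L z ->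
  completely_positive L z A ->
  let h1 := ile L (imul (A 0 1) (A 0 2)) (imul (A 0 0) (A 1 2)) in
  let h2 := ile L (imul (A 0 1) (A 1 2)) (imul (A 1 1) (A 0 2)) in
  let h3 := ile L (imul (A 0 2) (A 1 2)) (imul (A 2 2) (A 0 1)) in
  (h1 /\ h2) \/ (h1 /\ h3) \/ (h2 /\ h3).
Proof.
  intros TO [C _] Z CP.
  destruct (completely_positive_gram L z A CP) as [cols HA].
  cbv zeta. rewrite !HA by lia.
  set (G := gram L z col_entry cols).
  pose proof (gram_pivot L z col_entry cols 0 1 2 C TO Z) as P12.
  pose proof (gram_pivot L z col_entry cols 0 2 1 C TO Z) as P13.
  pose proof (gram_pivot L z col_entry cols 1 2 0 C TO Z) as P23.
  fold G in P12, P13, P23.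
  assert (G_sym : forall i j, G i j = G j i) by (intros; apply gram_sym, C).
  rewrite (G_sym 2 1), (C (G 0 2)) in P13.
  rewrite (G_sym 1 0), (G_sym 2 0), (C (G 1 2) (G 0 1)), (C (G 1 2) (G 0 2)) in P23.
  tauto.
Qed.
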